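(* Let $C$ be an $A$-code of length $l>1$ with $L_{\mathrm{ind}}(C)=1$, and let $g^{(1)}=(g_{1,1},\ldots,g_{1,l})$ be the first element of the canonical basis of divisors of $C$ (so $g_{1,1}$ is a monic divisor of $f$). Let $h_{1,1}\in A$ be the image of the polynomial $f(x)/g_{1,1}(x)$. Let $C'\subseteq A^{l-1}$ be the code obtained from $C^{(2)}=\{c\in C: c_1=0\}$ by deleting the first coordinate, and let $H'=(h'_{ij})_{2\le i\le k,\,2\le j\le l}$ be any generator matrix of $C'^{\perp}$. For $2\le i\le k$ let $\alpha_i$ be the remainder, upon division by the polynomial $f/g_{1,1}$, of the polynomial $-\bigl(\sum_{j=2}^l h'_{ij}g_{1,j}\bigr)/g_{1,1}$ (entries regarded as polynomials of degree $<m$). Then the $k\times l$ matrix $$H=\begin{pmatrix} h_{1,1} & 0\ \cdots\ 0\\ \alpha_2 & \\ \vdots & H'\\ \alpha_k & \end{pmatrix}$$ is a generator matrix of $C^{\perp}$.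
   Context: Let $\mathbb{F}$ be a finite field, $f(x)\in\mathbb{F}[x]$ monic of degree $m$, and $A=\mathbb{F}[x]/\langle f(x)\rangle$, elements identified with polynomials of degree $<m$. An $A$-code of length $l$ is an $A$-submodule of $A^l$; a generator matrix of it is a matrix over $A$ whose rows generate it as an $A$-module. The dual is $C^\perp=\{a\in A^l:\sum_i a_ic_i=0\ \forall c\in C\}$. For $u\in A^l$, $L_{\mathrm{ind}}(u)$ is the smallest index of a nonzero entry ($\infty$ for $u=0$) and $L_{\mathrm{coef}}(u)$ is that entry. For nonzero $C$, $L_{\mathrm{ind}}(C)=\min_{u\in C}L_{\mathrm{ind}}(u)$; $L_{\mathrm{coef}}(C)$ is the monic polynomial $g$ of minimum degree such that some $c\in C$ has $L_{\mathrm{ind}}(c)=L_{\mathrm{ind}}(C)$, $L_{\mathrm{coef}}(c)=g$; such $c$ is a leading element. $C^{(1)}=C$, $C^{(n+1)}=\{c\in C^{(n)}:L_{\mathrm{ind}}(c)>L_{\mathrm{ind}}(C^{(n)})\}$ while $C^{(n)}\ne0$; with $k$ largest such that $C^{(k)}\neq0$, a tuple $(g^{(1)},\dots,g^{(k)})$ with $g^{(j)}$ a leading element of $C^{(j)}$ is a basis of divisors. If moreover, writing $g_{i,j_i}$ for the leading coefficient of $g^{(i)}$, one has $\deg g_{t,j_i}<\deg g_{i,j_i}$ for all $t<i$, the basis is the canonical basis of divisors (it exists and is unique for every nonzero $A$-code), and the matrix with rows $g^{(i)}$ is the canonical generator matrix (CGM). Leading coefficients of elements of a basis of divisors are monic divisors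 of $f$. *)

(* A = F[x]/<f> is rendered as mathcomp's quotient ring {poly %/ f}. *)
From HB Require Import structures.
From mathcomp Require Import all_boot all_order all_algebra.
Set Implicit Arguments. Unset Strict Implicit. Unset Printing Implicit Defensive.
Import GRing.Theory.
Local Open Scope ring_scope.

Section Codes.
Variable F : finFieldType.
Variable f : {poly F}.
Local Notation A := {poly %/ f}.

Section Len.
Variable l : nat.
Local Notation V := 'rV[A]_l.

Definition is_Acode (C : {set V}) : Prop :=
  [/\ 0 \in C,
      (forall c d, c \in C -> d \in C -> c + d \in C) &
      (forall (a : A) c, c \in C -> a *: c \in C)].

Definition generates n (C : {set V}) (M : 'M[A]_(n, l)) : Prop :=
  C = [set u *m M | u : 'rV[A]_n].

Definition dual (C : {set V}) : {set V} :=
  [set a : V | [forall c in C, \sum_(j < l) a 0 j * c 0 j == 0]].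

(* coordinates are 0-based: coordinate j (0 <= j < l) is the paper's j+1.
   entry u j = u_j for j < l, 0 otherwise. *)
Definition entry (u : V) (j : nat) : A := nth 0 [seq u 0 i | i <- enum 'I_l] j.

(* L_ind (0-based); value l plays the role of infinity (u = 0) *)
Definition lind (u : V) : nat := \big[minn/l]_(j : 'I_l | u 0 j != 0) (j : nat).

Definition lcoef (u : V) : A := entry u (lind u).

(* L_ind of a code (l if C = 0) *)
Definition Lind (C : {set V}) : nat := \big[minn/l]_(c in C) lind c.

Definition is_leading (C : {set V}) (c : V) : Prop :=
  [/\ c \in C, lind c = Lind C, (lcoef c : {poly F}) \is monic &
      forall d, d \in C -> lind d = Lind C -> (lcoef d : {poly F}) \is monic ->
        (size (lcoef c : {poly F}) <= size (lcoef d : {poly F}))%N].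

(* subcode C n = C^{(n+1)} *)
Fixpoint subcode (C : {set V}) (n : nat) : {set V} :=
  match n with
  | 0 => C
  | n'.+1 => [set c in subcode C n' | (Lind (subcode C n') < lind c)%N]
  end.

Definition is_basis_of_divisors (C : {set V}) (g : seq V) : Prop :=
  (forall i, (i < size g)%N ->
      subcode C i != [set 0] /\ is_leading (subcode C i) (nth 0%R g i)) /\
  subcode C (size g) \subset [set 0].

Definition is_canonical_basis (C : {set V}) (g : seq V) : Prop :=
  is_basis_of_divisors C g /\
  forall i t, (t < i)%N -> (i < size g)%N ->
    (size (entry (nth 0%R g t) (lind (nth 0%R g i)) : {poly F})
       < size (entry (nth 0%R g i) (lind (nth 0%R g i)) : {poly F}))%N.

End Len.

Section Dual.
Variables (l' n : nat).

Definition Cprime (C : {set 'rV[A]_(1 + l')}) : {set 'rV[A]_l'} :=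
  [set rsubmx c | c in subcode C 1].

Definition g11 (g1 : 'rV[A]_(1 + l')) : {poly F} := (lsubmx g1 0 0 : {poly F}).

Definition alpha (g1 : 'rV[A]_(1 + l')) (H' : 'M[A]_(n, l')) (i : 'I_n) : A :=
  in_qpoly f
    ((- (((\sum_(j < l') H' i j * rsubmx g1 0 j : A) : {poly F}) %/ g11 g1))
       %% (f %/ g11 g1)).

Definition Hmat (g1 : 'rV[A]_(1 + l')) (H' : 'M[A]_(n, l')) : 'M[A]_(1 + n, 1 + l') :=
  block_mx ((in_qpoly f (f %/ g11 g1))%:M : 'M[A]_1) (0 : 'M[A]_(1, l'))
           (\col_i alpha g1 H' i) H'.
End Dual.
End Codes.

From HB Require Import structures.
From mathcomp Require Import all_boot all_order all_algebra.
Set Implicit Arguments. Unset Strict Implicit. Unset Printing Implicit Defensive.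
Import GRing.Theory.
Local Open Scope ring_scope.

(* Let g1 be the first canonical basis vector and d its first coordinate. By
   minimality of deg d, every first coordinate of C, and f itself, is divisible
   by d, so C = A g1 + C^(2); hence a is in C^perp iff a.g1 = 0 and the tail of a
   is in C'^perp, i.e. the tail is u H' for some u. For each row h'_i of H' the
   vector h g1 (h = f/d) lies in C^(2), so h annihilates s_i = h'_i.g1' and thus
   d divides s_i, with alpha_i d = -s_i. Then a.g1 = (a_1 - sum u_i alpha_i) d,
   and the annihilator of d in A is the ideal generated by h. *)

Section QuotientRing.
Variables (F : fieldType) (f : {poly F}).
Hypotheses (f_monic : f \is monic) (size_f_gt1 : (1 < size f)%N).
Local Notation A := {poly %/ f}.

Lemma mk_monic_id : mk_monic f = f.
Proof. by rewrite /mk_monic size_f_gt1 f_monic. Qed.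

Lemma size_qpoly (a : A) : (size (a : {poly F}) < size f)%N.
Proof. by rewrite -{2}mk_monic_id size_mk_monic. Qed.

Lemma in_qpolyK : cancel (fun a : A => a : {poly F}) (in_qpoly f).
Proof. by move=> a; apply: val_inj; apply: in_qpoly_small; exact: size_mk_monic. Qed.

Lemma in_qpolyE p : in_qpoly f p = p %% f :> {poly F}.
Proof. by rewrite /= mk_monic_id modpE (monicP f_monic) expr1n invr1 scale1r. Qed.

Lemma in_qpoly_eq0 p : (in_qpoly f p == 0) = (f %| p).
Proof.
apply/eqP/idP => [/(congr1 (fun a : A => a : {poly F}))|/modp_eq0P fp].
  by rewrite in_qpolyE => /modp_eq0P.
by apply: val_inj; rewrite /= -fp; exact: in_qpolyE.
Qed.

Lemma in_qpoly_self : in_qpoly f f = 0.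
Proof. by apply/eqP; rewrite in_qpoly_eq0 dvdpp. Qed.

Lemma in_qpoly_small_val (p : {poly F}) :
  (size p < size f)%N -> in_qpoly f p = p :> {poly F}.
Proof. by move=> small_p; apply: in_qpoly_small; rewrite mk_monic_id. Qed.

Lemma qpolyC_mulE k (a : A) : in_qpoly f k%:P * a = k *: (a : {poly F}) :> {poly F}.
Proof.
rewrite -[a in LHS]in_qpolyK -rmorphM mul_polyC in_qpoly_small_val //.
exact: leq_ltn_trans (size_scale_leq _ _) (size_qpoly a).
Qed.

Variable d : {poly F}.
Hypothesis d_dvd_f : d %| f.
Local Notation G := (in_qpoly f d).
Local Notation h := (in_qpoly f (f %/ d)).

Lemma cofactor_neq0 : f %/ d != 0.
Proof.
apply: contra_neq (monic_neq0 f_monic) => fd0.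
by rewrite -(divpK d_dvd_f) fd0 mul0r.
Qed.

Lemma mul_cofactor_divisor : h * G = 0.
Proof. by rewrite -rmorphM /= divpK // in_qpoly_self. Qed.

(* [h * s = 0] forces [d %| s]; reducing the quotient modulo [f %/ d] is harmless
   since [(f %/ d) * d = f]. *)
Lemma mul_cofactor_eq0 (s : A) : h * s = 0 ->
  in_qpoly f ((- ((s : {poly F}) %/ d)) %% (f %/ d)) * G = - s.
Proof.
rewrite -{1}(in_qpolyK s) -rmorphM /= => /eqP; rewrite in_qpoly_eq0 => fs.
have d_dvd_s : d %| s by rewrite -(dvdp_mul2l _ _ cofactor_neq0) divpK.
set q := (s : {poly F}) %/ d; set k := (- q) %/ (f %/ d).
have -> : (- q) %% (f %/ d) = - q - k * (f %/ d).
  by rewrite {2}(divp_eq (- q) (f %/ d)) addrAC subrr add0r.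
rewrite -rmorphM /= mulrBl -mulrA divpK // mulNr divpK //.
by rewrite rmorphB /= rmorphN /= in_qpolyK rmorphM /= in_qpoly_self mulr0 subr0.
Qed.

Lemma mul_divisor_eq0 (b : A) : b * G = 0 -> exists v, b = v * h.
Proof.
rewrite -{1}(in_qpolyK b) -rmorphM /= => /eqP; rewrite in_qpoly_eq0 => fb.
have d_neq0 : d != 0.
  by apply: contraTneq d_dvd_f => ->; rewrite dvd0p monic_neq0.
have /dvdpP [w bw] : f %/ d %| b by rewrite -(dvdp_mul2r _ _ d_neq0) divpK.
by exists (in_qpoly f w); rewrite -rmorphM /= -bw in_qpolyK.
Qed.

End QuotientRing.

Section RowDot.
Variable R : comNzRingType.

Definition rdot k (a c : 'rV[R]_k) := \sum_(j < k) a 0 j * c 0 j.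

Lemma rdotDr k (a c e : 'rV[R]_k) : rdot a (c + e) = rdot a c + rdot a e.
Proof. by rewrite /rdot -big_split; apply: eq_bigr => j _; rewrite mxE mulrDr. Qed.

Lemma rdotZr k (a c : 'rV[R]_k) t : rdot a (t *: c) = t * rdot a c.
Proof. by rewrite /rdot mulr_sumr; apply: eq_bigr => j _; rewrite mxE mulrCA. Qed.

Lemma rdot_mulmxl k p (u : 'rV[R]_p) (M : 'M[R]_(p, k)) c :
  rdot (u *m M) c = \sum_(i < p) u 0 i * rdot (row i M) c.
Proof.
rewrite /rdot; under eq_bigr do rewrite mxE mulr_suml.
rewrite exchange_big; apply: eq_bigr => i _; rewrite mulr_sumr.
by apply: eq_bigr => j _; rewrite !mxE mulrA.
Qed.

Lemma lsubmx_row1 k (u : 'rV[R]_(1 + k)) : lsubmx u 0 0 = u 0 ord0.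
Proof. by rewrite mxE; congr (u 0 _); apply: val_inj. Qed.

Lemma row1_split k (a : 'rV[R]_(1 + k)) : a = row_mx (a 0 ord0)%:M (rsubmx a).
Proof.
rewrite -{1}[a]hsubmxK; congr row_mx; apply/rowP => j.
by rewrite ord1 lsubmx_row1 mxE.
Qed.

Lemma row_mx1_first k x (a : 'rV[R]_k) : row_mx (x%:M : 'M_1) a 0 ord0 = x.
Proof. by rewrite -lsubmx_row1 row_mxKl mxE. Qed.

Lemma rdot_split1 k (a c : 'rV[R]_(1 + k)) :
  rdot a c = a 0 ord0 * c 0 ord0 + rdot (rsubmx a) (rsubmx c).
Proof.
rewrite /rdot big_split_ord big_ord1 /=; congr (_ * _ + _).
- by congr (a 0 _); apply: val_inj.
- by congr (c 0 _); apply: val_inj.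
by apply: eq_bigr => j _; rewrite !mxE.
Qed.

End RowDot.

Section BigMin.
Variables (I : finType) (P : pred I) (F : I -> nat) (x : nat).

Lemma bigmin_leq i0 : P i0 -> (\big[minn/x]_(i | P i) F i <= F i0)%N.
Proof.
move=> Pi0; have : i0 \in index_enum I := mem_index_enum i0.
elim: (index_enum I) => // j r IH; rewrite inE big_cons.
case/predU1P => [<-|/IH le_r]; first by rewrite Pi0 geq_minl.
by case: ifP => // _; rewrite geq_min le_r orbT.
Qed.

Lemma bigmin_eq0P : (0 < x)%N ->
  \big[minn/x]_(i | P i) F i = 0%N -> exists2 i, P i & F i = 0%N.
Proof.
move=> x_gt0 min0; case: (pickP (fun i => P i && (F i == 0%N))).
  by move=> i /andP[Pi /eqP]; exists i.
move=> noF; suff : (0 < \big[minn/x]_(i | P i) F i)%N by rewrite min0.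
apply: (big_ind (fun y => 0 < y)%N) => // [a b|i Pi]; first by rewrite leq_min => ->.
by have := noF i; rewrite /= Pi lt0n /= => ->.
Qed.

End BigMin.

Section LeadingIndex.
Variables (F : finFieldType) (f : {poly F}) (l' : nat).
Local Notation V := 'rV[{poly %/ f}]_(1 + l').

Lemma lind_eq0 (u : V) : (lind u == 0%N) = (u 0 ord0 != 0).
Proof.
apply/eqP/idP => [/bigmin_eq0P [//|j uj /eqP j0]|u0].
  by rewrite (_ : ord0 = j) //; apply: val_inj; rewrite /= (eqP j0).
by apply/eqP; rewrite -leqn0; apply: (@bigmin_leq _ _ _ _ ord0).
Qed.

Lemma Lind_eq0P (C : {set V}) :
  Lind C = 0%N -> exists2 c, c \in C & c 0 ord0 != 0.
Proof. by case/bigmin_eq0P => // c Cc /eqP; rewrite lind_eq0; exists c. Qed.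

Lemma entry0 (u : V) : entry u 0 = u 0 ord0.
Proof. by rewrite /entry (nth_map ord0) ?size_enum_ord // (nth_ord_enum ord0 ord0). Qed.

Lemma lcoef_lind0 (u : V) : lind u = 0%N -> lcoef u = u 0 ord0.
Proof. by rewrite /lcoef => ->; rewrite entry0. Qed.

End LeadingIndex.

Section CheckMatrix.
Variables (F : finFieldType) (f : {poly F}) (l' n : nat).
Variables (g1 : 'rV[{poly %/ f}]_(1 + l')) (H' : 'M[{poly %/ f}]_(n, l')).

Lemma Hmat_mulE (u : 'rV_(1 + n)) :
  u *m Hmat g1 H' = row_mx ((u 0 ord0 * in_qpoly f (f %/ g11 g1)
                     + \sum_i rsubmx u 0 i * alpha g1 H' i)%:M) (rsubmx u *m H').
Proof.
rewrite {1}(row1_split u) /Hmat mul_row_block mulmx0 add0r -scalar_mxM.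
congr row_mx; apply/rowP => j; rewrite ord1 !mxE eqxx mulr1n; congr (_ + _).
by apply: eq_bigr => i _; rewrite !mxE.
Qed.

End CheckMatrix.

Section FirstRow.
Variables (F : finFieldType) (f : {poly F}) (l' : nat).
Hypotheses (f_monic : f \is monic) (size_f_gt1 : (1 < size f)%N).
Local Notation A := {poly %/ f}.
Local Notation V := 'rV[A]_(1 + l').

Lemma in_dual k (D : {set 'rV[A]_k}) a :
  (a \in dual D) <-> (forall c, c \in D -> rdot a c = 0).
Proof.
rewrite inE /rdot; split; first by move=> /forall_inP D_a c /D_a /eqP.
by move=> D_a; apply/forall_inP => c /D_a ->.
Qed.

Variable C : {set V}.
Hypotheses (C_code : is_Acode C) (Lind_C : Lind C = 0%N).

Lemma Acode_add c e : c \in C -> e \in C -> c + e \in C.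
Proof. by case: C_code => _ addC _; apply: addC. Qed.

Lemma Acode_scale a c : c \in C -> a *: c \in C.
Proof. by case: C_code => _ _ scaleC; apply: scaleC. Qed.

Lemma Acode_sub c e : c \in C -> e \in C -> c - e \in C.
Proof. by move=> Cc Ce; rewrite -scaleN1r; apply/Acode_add/Acode_scale. Qed.

Lemma subcode1E c : (c \in subcode C 1) = (c \in C) && (c 0 ord0 == 0).
Proof. by rewrite inE Lind_C lt0n lind_eq0 negbK. Qed.

Variable g : seq V.
Hypothesis g_basis : is_basis_of_divisors C g.

Lemma basis_size_gt0 : (0 < size g)%N.
Proof.
have [c Cc c0] := Lind_eq0P Lind_C; rewrite lt0n; apply/eqP => g_nil.
move: g_basis => [_]; rewrite g_nil => /subsetP /(_ c Cc); rewrite inE => /eqP c_0.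
by rewrite c_0 mxE eqxx in c0.
Qed.

Local Notation g1 := (nth 0 g 0).
Local Notation d := (g1 0 ord0 : {poly F}).

Lemma leading_first : is_leading C g1.
Proof. exact: (g_basis.1 0%N basis_size_gt0).2. Qed.

Lemma mem_first : g1 \in C.
Proof. by have [] := leading_first. Qed.

Lemma lcoef_first : lcoef g1 = g1 0 ord0.
Proof. by have [_ ind_g1 _ _] := leading_first; rewrite lcoef_lind0 // ind_g1. Qed.

Lemma monic_first : d \is monic.
Proof. by have [_ _ + _] := leading_first; rewrite lcoef_first. Qed.

(* Rescaling by the inverse leading coefficient makes a nonzero first coordinate
   monic, which minimality of [size d] then forbids. *)
Lemma first_coord_eq0 (c : V) :
  c \in C -> (size (c 0%R ord0 : {poly F}) < size d)%N -> c 0 ord0 = 0.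
Proof.
move=> Cc small_c; apply/eqP; apply: contraTT small_c => c0_neq0.
set r := (c 0 ord0 : {poly F}); set k := (lead_coef r)^-1.
have r_neq0 : r != 0 by apply: contra c0_neq0 => /eqP r0; apply/eqP/val_inj.
have k_neq0 : k != 0 by rewrite invr_eq0 lead_coef_eq0.
set c' := in_qpoly f k%:P *: c.
have c'0E : (c' 0 ord0 : {poly F}) = k *: r by rewrite mxE qpolyC_mulE.
have monic_c'0 : (c' 0 ord0 : {poly F}) \is monic.
  by rewrite c'0E monicE lead_coefZ mulVf ?lead_coef_eq0.
have lind_c' : lind c' = 0%N.
  apply/eqP; rewrite lind_eq0; apply: contraTneq monic_c'0 => ->.
  by rewrite monicE lead_coef0 eq_sym oner_eq0.
have [_ _ _ /(_ c')] := leading_first.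
rewrite lcoef_first lcoef_lind0 // lind_c' Lind_C c'0E size_scale // -leqNgt.
by apply; rewrite ?Acode_scale // -c'0E.
Qed.

Lemma first_dvd : d %| f.
Proof.
have C_c : - in_qpoly f (f %/ d) *: g1 \in C by apply/Acode_scale/mem_first.
have size_fd_d : (size (f %% d)%R < size d)%N by rewrite ltn_modp monic_neq0 ?monic_first.
have size_fd := ltn_trans size_fd_d (size_qpoly f_monic size_f_gt1 (g1 0 ord0)).
have c0E : (- in_qpoly f (f %/ d) *: g1) 0 ord0 = in_qpoly f (f %% d).
  rewrite mxE -{2}[g1 0 ord0]in_qpolyK -rmorphN -rmorphM.
  have -> : forall p q : {poly F}, - (p %/ q) * q = p %% q - p.
    by move=> p q; rewrite mulNr {3}(divp_eq p q) opprD addrCA subrr addr0.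
  by rewrite rmorphB /= in_qpoly_self // subr0.
apply/modp_eq0P; rewrite -(in_qpoly_small_val f_monic size_f_gt1 size_fd) -c0E.
by rewrite first_coord_eq0 // c0E in_qpoly_small_val.
Qed.

Lemma first_reduce (c : V) :
  c \in C -> c - in_qpoly f ((c 0 ord0 : {poly F}) %/ d) *: g1 \in subcode C 1.
Proof.
move=> Cc; set p := (c 0 ord0 : {poly F}).
have C_c' : c - in_qpoly f (p %/ d) *: g1 \in C.
  by apply/Acode_sub/Acode_scale/mem_first.
have size_pd : (size (p %% d)%R < size d)%N by rewrite ltn_modp monic_neq0 ?monic_first.
have c'0E : (c - in_qpoly f (p %/ d) *: g1) 0 ord0 = in_qpoly f (p %% d).
  rewrite !mxE -[c 0 ord0]in_qpolyK -{2}[g1 0 ord0]in_qpolyK -rmorphM -rmorphB.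
  by rewrite -/p {1}(divp_eq p d) addrAC subrr add0r.
rewrite subcode1E C_c' /=; apply/eqP/first_coord_eq0 => //.
rewrite c'0E in_qpoly_small_val //.
exact: ltn_trans size_pd (size_qpoly f_monic size_f_gt1 (g1 0 ord0)).
Qed.

Lemma dual_split (a : V) :
  a \in dual C <-> rdot a g1 = 0 /\ rsubmx a \in dual (Cprime C).
Proof.
split=> [/in_dual a_C|[a_g1 /in_dual a_C']].
  split; first exact/a_C/mem_first.
  apply/in_dual => c' /imsetP [c]; rewrite subcode1E => /andP [Cc /eqP c0] ->.
  by rewrite -(a_C c Cc) rdot_split1 c0 mulr0 add0r.
apply/in_dual => c Cc; set t := in_qpoly f ((c 0 ord0 : {poly F}) %/ d).
have C1_c' := first_reduce Cc; move: (C1_c'); rewrite subcode1E => /andP [_ /eqP c'0].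
rewrite -(subrK (t *: g1) c) rdotDr rdotZr a_g1 mulr0 addr0.
by rewrite rdot_split1 c'0 mulr0 add0r a_C' //; apply: imset_f.
Qed.

Lemma cofactor_mul_first : in_qpoly f (f %/ d) * g1 0 ord0 = 0.
Proof. by rewrite -{2}[g1 0 ord0]in_qpolyK mul_cofactor_divisor ?first_dvd. Qed.

Lemma cofactor_rdot_eq0 b :
  b \in dual (Cprime C) -> in_qpoly f (f %/ d) * rdot b (rsubmx g1) = 0.
Proof.
move=> /in_dual b_C'; rewrite -rdotZr -linearZ /=; apply/b_C'/imset_f.
by rewrite subcode1E Acode_scale ?mem_first //= mxE cofactor_mul_first.
Qed.

Variables (n : nat) (H' : 'M[A]_(n, l')).
Hypothesis H'_gen : generates (dual (Cprime C)) H'.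

Lemma alpha_mul_first i :
  alpha g1 H' i * g1 0 ord0 = - rdot (row i H') (rsubmx g1).
Proof.
have row_dual : row i H' \in dual (Cprime C).
  by rewrite H'_gen rowE; apply/imsetP; exists (delta_mx 0 i).
have := mul_cofactor_eq0 f_monic size_f_gt1 first_dvd (cofactor_rdot_eq0 row_dual).
rewrite in_qpolyK => <-; congr (_ * _).
rewrite /alpha /g11 lsubmx_row1.
suff -> : \sum_(j < l') H' i j * rsubmx g1 0 j = rdot (row i H') (rsubmx g1) by [].
by apply: eq_bigr => j _; rewrite !mxE.
Qed.

Lemma rdot_first_span (a : V) (u : 'rV[A]_n) : rsubmx a = u *m H' ->
  rdot a g1 = (a 0 ord0 - \sum_i u 0 i * alpha g1 H' i) * g1 0 ord0.
Proof.
move=> a_u; rewrite rdot_split1 a_u rdot_mulmxl mulrBl mulr_suml -sumrN.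
by congr (_ + _); apply: eq_bigr => i _; rewrite -mulrA alpha_mul_first mulrN opprK.
Qed.

End FirstRow.

Unset Implicit Arguments.
Set Strict Implicit.

Theorem mainTheorem2 (F : finFieldType) (f : {poly F})
  (Hfmonic : f \is monic) (Hfdeg : (1 < size f)%N)
  (l' : nat) (Hl : (0 < l')%N)
  (C : {set 'rV[{poly %/ f}]_(1 + l')}) (HC : is_Acode C)
  (Hind : Lind C = 0%N)
  (g : seq 'rV[{poly %/ f}]_(1 + l')) (Hg : is_canonical_basis C g)
  (n : nat) (H' : 'M[{poly %/ f}]_(n, l'))
  (HH' : generates (dual (Cprime C)) H') :
  generates (dual C) (Hmat (nth 0 g 0) H').
Proof.
have [g_basis _] := Hg.
have dual_splitC := dual_split Hfmonic Hfdeg HC Hind g_basis.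
have span := rdot_first_span Hfmonic Hfdeg HC Hind g_basis HH'.
have d_dvd_f := first_dvd Hfmonic Hfdeg HC Hind g_basis.
apply/setP => a; apply/idP/imsetP => [/dual_splitC [a_g1]|[u _ ->]].
  rewrite HH' => /imsetP [u _ a_u].
  have [|v av] := mul_divisor_eq0 Hfmonic Hfdeg d_dvd_f
    (b := a 0 ord0 - \sum_i u 0 i * alpha (nth 0 g 0) H' i).
    by rewrite in_qpolyK -span.
  exists (row_mx v%:M u) => //.
  rewrite Hmat_mulE row_mx1_first row_mxKr /g11 lsubmx_row1 -av subrK -a_u.
  exact: row1_split.
apply/dual_splitC; split.
  rewrite (span _ (rsubmx u)); last by rewrite Hmat_mulE row_mxKr.
  rewrite Hmat_mulE row_mx1_first addrK -mulrA /g11 lsubmx_row1.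
  by rewrite (cofactor_mul_first Hfmonic Hfdeg HC Hind g_basis) mulr0.
by rewrite Hmat_mulE row_mxKr HH'; apply/imsetP; exists (rsubmx u).
Qed.
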